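(* Let $G$ be a connected weighted multigraph on the vertex set $V$, $|V|\ge2$, with positive edge weights. Let $\mathcal A\subseteq\mathbb R$ and let $\varphi_\alpha:(0,\infty)\to(0,\infty)$, $\alpha\in\mathcal A$, be a family of functions. For $\alpha\in\mathcal A$ let $G_\alpha$ be obtained from $G$ by replacing each edge weight $w$ by $\varphi_\alpha(w)$, let $L_\alpha$ be the Laplacian matrix of $G_\alpha$, let $Q_\alpha=(I+L_\alpha)^{-1}=(q_{ij}(\alpha))$, and let $\theta_\alpha>0$ be a scaling factor; the logarithmic forest distance is $d^F_\alpha(i,j)=\theta_\alpha\bigl(\tfrac12(\ln q_{ii}(\alpha)+\ln q_{jj}(\alpha))-\ln q_{ij}(\alpha)\bigr)$. Then for every $\alpha\in\mathcal A$ there are a constant $c_\alpha>0$ and a graph $\tilde G_\alpha$ obtained from $G_\alpha$ by multiplying all edge weights by $c_\alpha$ and attaching loops (with positive weights) to some vertices so that its weighted adjacency matrix $A(\alpha)$ has constant row sums, such that the spectral radius of $A(\alpha)$ is less than $1$, $\tilde R_\alpha=\sum_{k\ge0}A(\alpha)^k=(I-A(\alpha))^{-1}=(\tilde r_{ij}(\alpha))$ is finite, and for all $i,j\in V$ $$d^F_\alpha(i,j)=\theta_\alpha\Bigl(\tfrac12\bigl(\ln\tilde r_{ii}(\alpha)+\ln\tilde r_{jj}(\alpha)\bigr)-\ln\tilde r_{ij}(\alpha)\Bigr).$$ Thus the family of logarithmic forest distances coincides with a family of modified walk distances obtained by balancing the graphs $G_\alpha$ by loops.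
   Context: The weighted adjacency matrix $A(H)=(a_{ij})$ of a weighted multigraph $H$ has $a_{ij}$ equal to the sum of the weights of the edges joining $i$ and $j$ (loops included). The Laplacian matrix is $L(H)=\operatorname{diag}(A(H)\mathbf 1)-A(H)$. *)

From mathcomp Require Import all_boot all_order all_algebra.
From mathcomp Require Import all_classical all_reals all_analysis.
From mathcomp Require Import complex.
Set Implicit Arguments. Unset Strict Implicit. Unset Printing Implicit Defensive.
Import Order.TTheory GRing.Theory Num.Theory.
Local Open Scope ring_scope.

(* A weighted multigraph on the vertex set 'I_n: a finite type E of edges,
   each edge e has endpoints src e, tgt e (src e = tgt e is a loop) and a
   weight w e. *)

(* Weighted adjacency matrix: a_ij = sum of weights of edges joining i and j
   (loops at i contribute once to a_ii). *)
Definition wadj (R : realType) (n : nat) (E : finType)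
  (src tgt : E -> 'I_n) (w : E -> R) : 'M[R]_n :=
  \matrix_(i, j) \sum_(e : E | ((src e == i) && (tgt e == j))
                               || ((src e == j) && (tgt e == i))) w e.

Definition laplacian (R : realType) (n : nat) (A : 'M[R]_n) : 'M[R]_n :=
  diag_mx (\row_i \sum_j A i j) - A.

Definition mg_adjacent (n : nat) (E : finType) (src tgt : E -> 'I_n) : rel 'I_n :=
  fun x y => [exists e : E, ((src e == x) && (tgt e == y))
                           || ((src e == y) && (tgt e == x))].

Definition mg_connected (n : nat) (E : finType) (src tgt : E -> 'I_n) : Prop :=
  forall i j : 'I_n, connect (mg_adjacent src tgt) i j.

Definition eigenvalueC (R : realType) (n : nat) (A : 'M[R]_n) (z : R[i]) : bool :=
  root (char_poly (map_mx (real_complex R) A)) z.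

Definition spectral_radius_lt1 (R : realType) (n : nat) (A : 'M[R]_n) : Prop :=
  forall z : R[i], eigenvalueC A z -> `|z| < 1.

Definition log_dist (R : realType) (n : nat) (theta : R) (M : 'M[R]_n)
  (i j : 'I_n) : R :=
  theta * (2^-1 * (ln (M i i) + ln (M j j)) - ln (M i j)).

Definition forest_dist (R : realType) (n : nat) (theta : R) (A : 'M[R]_n)
  (i j : 'I_n) : R :=
  log_dist theta (invmx (1%:M + laplacian A)) i j.

From mathcomp Require Import all_boot all_order all_algebra.
From mathcomp Require Import all_classical all_reals all_analysis.
From mathcomp Require Import complex.
From mathcomp Require Import ring.

Set Implicit Arguments.
Unset Strict Implicit.
Unset Printing Implicit Defensive.

Import Order.TTheory GRing.Theory Num.Theory.
Import numFieldNormedType.Exports.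
Local Open Scope ring_scope.
Local Open Scope classical_set_scope.

(* With A the adjacency matrix of G_alpha, D its degree matrix and c small
   enough, attaching the loop 1 - c (1 + d_v) at every vertex v gives
   A~ = c A + (I - c (I + D)) = I - c (I + L).  Hence (I - A~)^-1 = c^-1 Q,
   and the logarithmic distance does not see the positive factor c^-1.
   A~ is a nonnegative symmetric matrix with row and column sums 1 - c < 1,
   which bounds its spectrum, makes the Neumann series converge, and by
   connectivity makes every entry of (I - A~)^-1 positive, so that all the
   logarithms involved are those of positive numbers. *)

Lemma ler_sum_term (R : numDomainType) (I : finType) (f : I -> R) (j : I) :
  (forall l, 0 <= f l) -> f j <= \sum_l f l.
Proof. by move=> f_ge0; rewrite (bigD1 j) //= lerDl sumr_ge0. Qed.

Lemma sum_mulrn_eq (R : nmodType) (I : finType) (x : R) (i : I) :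
  \sum_j x *+ (i == j) = x.
Proof.
rewrite (bigD1 i) //= eqxx mulr1n big1 ?addr0 // => j.
by rewrite eq_sym => /negbTE ->.
Qed.

Section NonnegativeMatrixPowers.
Variables (R : numDomainType) (n : nat) (M : 'M[R]_n).
Hypothesis M_ge0 : forall i j, 0 <= M i j.

Lemma exprmx_ge0 N i j : 0 <= (M ^+ N) i j.
Proof.
elim: N i j => [|N IH] i j; first by rewrite expr0 mxE ler0n.
by rewrite exprS -mulmxE mxE sumr_ge0 // => l _; rewrite mulr_ge0.
Qed.

Variable r : R.
Hypothesis M_row : forall i, \sum_j M i j = r.

Lemma sum_row_exprmx N i : \sum_j (M ^+ N) i j = r ^+ N.
Proof.
elim: N i => [|N IH] i.
  by rewrite expr0; under eq_bigr do rewrite mxE; rewrite sum_mulrn_eq.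
rewrite exprS; under eq_bigr do rewrite -mulmxE mxE.
rewrite exchange_big /=; under eq_bigr do rewrite -mulr_sumr IH.
by rewrite -mulr_suml M_row exprS.
Qed.

Lemma exprmx_le_expr N i j : (M ^+ N) i j <= r ^+ N.
Proof.
rewrite -(sum_row_exprmx N i).
exact: ler_sum_term (exprmx_ge0 N i).
Qed.

Lemma exprmx_path_gt0 (e : rel 'I_n) : (forall x y, e x y -> 0 < M x y) ->
  forall p x, path e x p -> 0 < (M ^+ size p) x (last x p).
Proof.
move=> M_e; elim=> [|y p IH] x /=; first by rewrite expr0 mxE eqxx ltr01.
case/andP=> e_xy e_p; rewrite exprS -mulmxE mxE (bigD1 y) //=.
rewrite ltr_pwDl ?mulr_gt0 ?M_e ?IH //.
by rewrite sumr_ge0 // => l _; rewrite mulr_ge0 ?exprmx_ge0.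
Qed.

End NonnegativeMatrixPowers.

Section ColumnSumBound.
Local Open Scope complex_scope.
Variables (R : rcfType) (n : nat) (M : 'M[R]_n) (r : R).
Hypothesis M_ge0 : forall i j, 0 <= M i j.
Hypothesis M_col : forall j, \sum_i M i j = r.

Local Notation MC := (map_mx (real_complex R) M).

(* Evaluate the eigen-equation at a coordinate of v of maximal modulus. *)
Lemma eigenvalue_norm_le_col_sum (z : R[i]) (v : 'rV[R[i]]_n) :
  v *m MC = z *: v -> v != 0 -> `|z| <= r%:C.
Proof.
move=> v_eig v_neq0.
have [i0 _] : exists i0 : 'I_n, true.
  move: v v_eig v_neq0; case: n M => [|n'] _ v _; last by exists ord0.
  by rewrite (_ : v = 0) ?eqxx //; apply/matrixP => i [].
pose j := [arg max_(j > i0) Normc.normc (v 0 j)]%O.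
have v_max i : `|v 0 i| <= `|v 0 j|.
  rewrite /j; case: arg_maxP => // j' _ j'_max.
  by case: (v 0 i) (v 0 j') (j'_max i isT) => ? ? [? ?] /=; rewrite lecR.
have vj_gt0 : 0 < `|v 0 j|.
  rewrite normr_gt0; apply: contra v_neq0 => /eqP vj0.
  apply/eqP/matrixP => a b; rewrite [a]ord1 mxE; apply/eqP.
  by rewrite -normr_eq0 eq_le normr_ge0 andbT -(normr0 R[i]) -vj0 v_max.
have eig_j : z * v 0 j = \sum_i v 0 i * (M i j)%:C.
  have := congr1 (fun B : 'rV_n => B 0 j) v_eig; rewrite !mxE => <-.
  by apply: eq_bigr => i _; rewrite mxE.
rewrite -(ler_pM2r vj_gt0) -normrM eig_j -(M_col j) rmorph_sum mulr_suml.
apply: le_trans (ler_norm_sum _ _ _) _; apply: ler_sum => i _.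
rewrite normrM (ger0_norm (_ : 0 <= (M i j)%:C)) ?ler0c //.
by rewrite mulrC ler_wpM2l ?ler0c.
Qed.

Lemma unitmx_1B_col_sum_lt1 : r < 1 -> 1%:M - M \in unitmx.
Proof.
move=> r_lt1; apply/negPn/negP => not_unit.
have : kermx (1%:M - M) != 0 by rewrite kermx_eq0 row_free_unit.
case/rowV0Pn => v /sub_kermxP; rewrite mulmxBr mulmx1 => /eqP.
rewrite subr_eq0 => /eqP v_fix v_neq0.
have := @eigenvalue_norm_le_col_sum 1 (map_mx (real_complex R) v).
rewrite -map_mxM -v_fix scale1r map_mx_eq0 v_neq0 => /(_ erefl isT).
by rewrite normr1 -(rmorph1 (real_complex R)) lecR leNgt r_lt1.
Qed.

End ColumnSumBound.

Lemma spectral_radius_lt1_col_sum (R : realType) (n : nat) (M : 'M[R]_n) r :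
  (forall i j, 0 <= M i j) -> (forall j, \sum_i M i j = r) -> r < 1 ->
  spectral_radius_lt1 M.
Proof.
move=> M_ge0 M_col r_lt1 z.
rewrite /eigenvalueC -eigenvalue_root_char => /eigenvalueP [v v_eig v_neq0].
apply: le_lt_trans (eigenvalue_norm_le_col_sum M_ge0 M_col v_eig v_neq0) _.
by rewrite -(rmorph1 (real_complex R)) ltcR.
Qed.

Lemma geometric_sum_mx (R : comUnitRingType) (n : nat) (M : 'M[R]_n) N :
  1%:M - M \in unitmx ->
  \sum_(k < N) M ^+ k = invmx (1%:M - M) - invmx (1%:M - M) *m M ^+ N.
Proof.
move=> unit_1B.
have geo : (1%:M - M) *m \sum_(k < N) M ^+ k = 1%:M - M ^+ N.
  rewrite mulmxE; elim: N => [|N IH].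
    by rewrite big_ord0 mulr0 expr0 subrr.
  by rewrite big_ord_recr /= mulrDr IH mulrBl mul1r -exprS addrA subrK.
by rewrite -[LHS]mul1mx -{1}(mulVmx unit_1B) -mulmxA geo mulmxBr mulmx1.
Qed.

Section NeumannSeries.
Variables (R : realType) (n : nat) (M : 'M[R]_n) (r : R).
Hypothesis M_ge0 : forall i j, 0 <= M i j.
Hypothesis M_row : forall i, \sum_j M i j = r.
Hypotheses (r_ge0 : 0 <= r) (r_lt1 : r < 1).
Hypothesis unit_1B : 1%:M - M \in unitmx.

Local Notation P := (invmx (1%:M - M)).

Lemma cvg_geometric_series_mx i j :
  (fun N : nat => (\sum_(k < N) M ^+ k) i j) @ \oo --> P i j.
Proof.
pose C := \sum_l `|P i l|.
have tail_le N : `|(P *m M ^+ N) i j| <= C * r ^+ N.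
  rewrite mxE /C mulr_suml; apply: le_trans (ler_norm_sum _ _ _) _.
  apply: ler_sum => l _; rewrite normrM (ger0_norm (exprmx_ge0 M_ge0 N l j)).
  exact: ler_wpM2l (exprmx_le_expr M_ge0 M_row N l j).
have tail_cvg0 : (fun N => (P *m M ^+ N) i j) @ \oo --> 0.
  have geo_cvg0 (x : R) : (fun N => x * r ^+ N) @ \oo --> 0.
    by rewrite -(mulr0 x); apply: cvgMl_tmp; apply: cvg_expr; rewrite ger0_norm.
  apply: (@squeeze_cvgr _ _ _ _ (fun N => - C * r ^+ N) (fun N => C * r ^+ N));
    rewrite ?geo_cvg0 //.
  by apply: nearW => N; rewrite mulNr -ler_norml.
rewrite (_ : (fun N => _) = (fun N => P i j - (P *m M ^+ N) i j)).
  by rewrite -[X in _ --> X]subr0; apply: cvgB tail_cvg0; apply: cvg_cst.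
by apply: funext => N; rewrite geometric_sum_mx // !mxE.
Qed.

Lemma exprmx_le_invmx_1B m i j : (M ^+ m) i j <= P i j.
Proof.
have near_le : \forall N \near \oo, (M ^+ m) i j <= (\sum_(k < N) M ^+ k) i j.
  exists m.+1 => // N /= m_lt_N; rewrite summxE.
  exact: ler_sum_term (Ordinal m_lt_N) (fun k => exprmx_ge0 M_ge0 k i j).
have := closed_cvg _ (@closed_ge R _) near_le _ (@cvg_geometric_series_mx i j).
by apply.
Qed.

Lemma invmx_1B_gt0 (e : rel 'I_n) : (forall x y, e x y -> 0 < M x y) ->
  forall i j, connect e i j -> 0 < P i j.
Proof.
move=> M_e i j /connectP [p e_p ->].
exact: lt_le_trans (exprmx_path_gt0 M_ge0 M_e e_p) (exprmx_le_invmx_1B _ _ _).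
Qed.

End NeumannSeries.

Section WeightedAdjacency.
Variables (R : realType) (n : nat) (E : finType).
Variables (src tgt : E -> 'I_n) (w : E -> R).
Hypothesis w_gt0 : forall e, 0 < w e.

Lemma wadj_ge0 i j : 0 <= wadj src tgt w i j.
Proof. by rewrite mxE sumr_ge0 // => e _; rewrite ltW. Qed.

Lemma wadj_sym i j : wadj src tgt w i j = wadj src tgt w j i.
Proof. by rewrite !mxE; apply: eq_bigl => e; rewrite orbC. Qed.

Lemma wadj_gt0 i j : mg_adjacent src tgt i j -> 0 < wadj src tgt w i j.
Proof.
case/existsP=> e e_ij; rewrite mxE (bigD1 e) //= ltr_pwDl //.
by rewrite sumr_ge0 // => e' _; rewrite ltW.
Qed.

End WeightedAdjacency.

Section Balancing.
Variables (R : realType) (n : nat) (c : R) (A : 'M[R]_n).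

Definition balancing_loop (v : 'I_n) : R := 1 - c * (1 + \sum_j A v j).

Definition balanced : 'M[R]_n := c *: A + diag_mx (\row_v balancing_loop v).

Lemma balancedE i j : balanced i j = c * A i j + balancing_loop i *+ (i == j).
Proof. by rewrite !mxE. Qed.

Lemma balanced_1B : 1%:M - balanced = c *: (1%:M + laplacian A).
Proof.
apply/matrixP => i j; rewrite !mxE /balancing_loop.
by case: eqP => [<-|_]; rewrite ?mulr1n ?mulr0n; ring.
Qed.

Lemma sum_row_balanced i : \sum_j balanced i j = 1 - c.
Proof.
under eq_bigr do rewrite balancedE.
by rewrite big_split /= sum_mulrn_eq -mulr_sumr /balancing_loop; ring.
Qed.

Lemma balanced_sym : (forall i j, A i j = A j i) ->
  forall i j, balanced i j = balanced j i.
Proof.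
by move=> A_sym i j; rewrite !balancedE A_sym eq_sym; case: eqP => [->|].
Qed.

Lemma balanced_ge_scaled : (forall v, 0 <= balancing_loop v) ->
  forall i j, c * A i j <= balanced i j.
Proof. by move=> loop_ge0 i j; rewrite balancedE lerDl mulrn_wge0. Qed.

End Balancing.

Definition balancing_scale (R : realType) (n : nat) (A : 'M[R]_n) : R :=
  (1 + \sum_i \sum_j A i j)^-1.

Section BalancingScale.
Variables (R : realType) (n : nat) (A : 'M[R]_n).
Hypothesis A_ge0 : forall i j, 0 <= A i j.

Lemma balancing_scale_gt0 : 0 < balancing_scale A.
Proof.
by rewrite invr_gt0 ltr_pwDl // !sumr_ge0 // => i _; rewrite sumr_ge0.
Qed.

Lemma balancing_scale_le1 : balancing_scale A <= 1.
Proof.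
by rewrite invf_le1 ?lerDl ?ltr_pwDl // !sumr_ge0 // => i _; rewrite sumr_ge0.
Qed.

Lemma balancing_loop_scale_ge0 v : 0 <= balancing_loop (balancing_scale A) A v.
Proof.
have tot_ge0 : 0 <= \sum_i \sum_j A i j.
  by rewrite sumr_ge0 // => i _; rewrite sumr_ge0.
rewrite subr_ge0 /balancing_scale mulrC ler_pdivrMr ?mul1r ?lerD2l.
  by apply: ler_sum_term v _ => i; rewrite sumr_ge0.
by rewrite ltr_pwDl.
Qed.

End BalancingScale.

Lemma log_dist_scale (R : realType) (n : nat) (theta k : R) (M : 'M[R]_n) i j :
  0 < k -> (forall a b, 0 < M a b) ->
  log_dist theta (k *: M) i j = log_dist theta M i j.
Proof.
move=> k_gt0 M_gt0; rewrite /log_dist !mxE !lnM ?posrE //.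
by field.
Qed.

Theorem theorem7 (R : realType) (n : nat) (E : finType)
  (src tgt : E -> 'I_n) (w : E -> R)
  (Aset : set R) (phi : R -> R -> R) (theta : R -> R) :
  (2 <= n)%N ->
  mg_connected src tgt ->
  (forall e, 0 < w e) ->
  (forall alpha, alpha \in Aset -> forall x, 0 < x -> 0 < phi alpha x) ->
  (forall alpha, alpha \in Aset -> 0 < theta alpha) ->
  forall alpha, alpha \in Aset ->
  let Aalpha := wadj src tgt (fun e => phi alpha (w e)) in
  exists c : R, 0 < c /\
  exists loop : 'I_n -> R, (forall v, 0 <= loop v) /\
  let At := c *: Aalpha + diag_mx (\row_v loop v) in
  (exists s : R, forall i, \sum_j At i j = s) /\
  spectral_radius_lt1 At /\
  (1%:M - At) \in unitmx /\
  (forall i j, (fun N : nat => ((\sum_(k < N) At ^+ k) i j : R)) @ \oo -->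
                 (invmx (1%:M - At) i j : R)) /\
  forall i j : 'I_n,
    forest_dist (theta alpha) Aalpha i j =
    log_dist (theta alpha) (invmx (1%:M - At)) i j.
Proof.
move=> _ connected w_gt0 phi_gt0 _ alpha alpha_in A.
have wphi_gt0 e : 0 < phi alpha (w e) by apply: phi_gt0.
have A_ge0 := wadj_ge0 src tgt wphi_gt0.
pose c := balancing_scale A.
have c_gt0 : 0 < c := balancing_scale_gt0 A_ge0.
have loop_ge0 := balancing_loop_scale_ge0 A_ge0.
exists c; split => //; exists (balancing_loop c A); split => //.
rewrite -/(balanced c A); set B := balanced c A.
have B_ge0 i j : 0 <= B i j.
  exact: le_trans (mulr_ge0 (ltW c_gt0) (A_ge0 i j)) (balanced_ge_scaled _ _ _).
have B_row := sum_row_balanced c A.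
have B_sym i j : B i j = B j i := balanced_sym c (wadj_sym src tgt _) i j.
have B_col j : \sum_i B i j = 1 - c.
  by under eq_bigr do rewrite B_sym; apply: B_row.
have r_lt1 : 1 - c < 1 by rewrite ltrBlDr ltrDl.
have r_ge0 : 0 <= 1 - c by rewrite subr_ge0 balancing_scale_le1.
have unit_1B := unitmx_1B_col_sum_lt1 B_ge0 B_col r_lt1.
have B_adj x y : mg_adjacent src tgt x y -> 0 < B x y.
  move=> adj; apply: lt_le_trans (balanced_ge_scaled loop_ge0 x y).
  by rewrite mulr_gt0 ?wadj_gt0.
split; first by exists (1 - c).
split; first exact: spectral_radius_lt1_col_sum B_ge0 B_col r_lt1.
split=> //; split.
  exact: cvg_geometric_series_mx B_ge0 B_row r_ge0 r_lt1 unit_1B.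
have Q_E : invmx (1%:M + laplacian A) = c *: invmx (1%:M - B).
  rewrite /B balanced_1B invmxZ ?scalerA ?mulfV ?gt_eqF ?scale1r //.
  by rewrite -balanced_1B.
move=> i j; rewrite /forest_dist Q_E log_dist_scale // => a b.
have conn_ab : connect (mg_adjacent src tgt) a b := connected a b.
exact: (invmx_1B_gt0 B_ge0 B_row r_ge0 r_lt1 unit_1B B_adj conn_ab).
Qed.
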